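(* Let $n\ge 0$. Every cycle $C$ in the (unweighted) diamond graph $D_n$ is a principal cycle of some subdiamond of $D_n$. Moreover, every principal cycle of a subdiamond of height $2^t$ has length $2^{t+1}$.
   Context: Diamond graphs: $D_0$ consists of two vertices joined by an edge of length $1$; $D_n$ is obtained from $D_{n-1}$ by replacing every edge $uv$ by a quadrilateral $u,a,v,b$ with edges $ua,av,vb,bu$; all edges have length $1$ and $D_n$ carries its shortest-path metric. Call one vertex of $D_0$ the top and the other the bottom; the top (bottom) of $D_n$ is the vertex that evolved from the top (bottom) of $D_0$. A subdiamond of $D_n$ is a subgraph which evolved (through the successive replacements) from a single edge of some $D_k$, $0\le k\le n$. The top (bottom) of a subdiamond $S$ is its vertex closest to the top (bottom) of $D_n$; the height of $S$ is the distance between its top and bottom. When a subdiamond $S$ evolves from an edge $uv$, the first replacement step produces a quadrilateral $u,a,v,b$; the vertex of $S$ corresponding to $a$ is called the leftmost vertex and the one corresponding to $b$ the rightmost vertex of $S$. A principal cycle of $S$ is a cycle consisting of a path in $S$ from the top to the bottom of $S$ passing through the leftmost vertex together with a path in $S$ from the bottom to the top passing through the rightmost vertex. *)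

From HB Require Import structures.
From mathcomp Require Import all_boot.
Set Implicit Arguments. Unset Strict Implicit. Unset Printing Implicit Defensive.

(* An edge of D_n is encoded by a word of length n over letters
   (side, lower) : bool * bool, describing the successive replacements:
   when an edge uv (u the top end, v the bottom end) of D_k is replaced by
   the quadrilateral u,a,v,b, the letter (false, _) selects the left new
   vertex a, (true, _) the right new vertex b; (_, false) selects the upper
   edge (u to a/b) and (_, true) the lower edge (a/b to v).
   Vertices: Top, Bot, and Mid w s = the new vertex (left if s = false,
   right if s = true) created when replacing the edge w of D_(size w). *)

Definition letter := (bool * bool)%type.

Inductive vtx : Type :=
| Top : vtx
| Bot : vtx
| Mid : seq letter -> bool -> vtx.

Definition vtx_code (x : vtx) : (bool + (seq letter * bool))%type :=
  match x with Top => inl true | Bot => inl false | Mid w s => inr (w, s) end.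
Definition vtx_decode (c : (bool + (seq letter * bool))%type) : vtx :=
  match c with inl true => Top | inl false => Bot | inr (w, s) => Mid w s end.
Lemma vtx_codeK : cancel vtx_code vtx_decode. Proof. by case. Qed.
HB.instance Definition _ := Equality.copy vtx (can_type vtx_codeK).

(* endpoints (top end, bottom end) of the edge / subdiamond with word w *)
Fixpoint ends_aux (pre : seq letter) (uv : vtx * vtx) (w : seq letter)
  : vtx * vtx :=
  match w with
  | [::] => uv
  | (s, lo) :: w' =>
      let m := Mid pre s in
      ends_aux (rcons pre (s, lo)) (if lo then (m, uv.2) else (uv.1, m)) w'
  end.
Definition ends (w : seq letter) : vtx * vtx := ends_aux [::] (Top, Bot) w.

(* The subdiamond of D_n evolved from the edge w of D_(size w), size w <= n:
   its edges are the edges of D_n whose word extends w. *)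
Definition sub_top (w : seq letter) : vtx := (ends w).1.
Definition sub_bot (w : seq letter) : vtx := (ends w).2.
Definition sub_left (w : seq letter) : vtx := Mid w false.
Definition sub_right (w : seq letter) : vtx := Mid w true.

Definition adjS (n : nat) (w : seq letter) (x y : vtx) : Prop :=
  exists u : seq letter, size u = n /\ take (size w) u = w /\
    (ends u = (x, y) \/ ends u = (y, x)).

Definition adj (n : nat) (x y : vtx) : Prop :=
  exists u : seq letter, size u = n /\ (ends u = (x, y) \/ ends u = (y, x)).

Fixpoint ppath (e : vtx -> vtx -> Prop) (x : vtx) (p : seq vtx) : Prop :=
  match p with
  | [::] => True
  | y :: p' => e x y /\ ppath e y p'
  end.

Definition is_dist (n : nat) (x y : vtx) (d : nat) : Prop :=
  (exists p, ppath (adj n) x p /\ last x p = y /\ size p = d) /\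
  (forall p, ppath (adj n) x p -> last x p = y -> d <= size p).

(* a cycle of D_n, given by its cyclic sequence of (distinct) vertices;
   its length (number of edges) is size c *)
Definition is_cycle (n : nat) (c : seq vtx) : Prop :=
  3 <= size c /\ uniq c /\
  exists x p, c = x :: p /\ ppath (adj n) x (rcons p x).

Definition same_cycle (c d : seq vtx) : Prop :=
  exists k, c = rot k d \/ c = rot k (rev d).

Definition principal_cycle (n : nat) (w : seq letter) (c : seq vtx) : Prop :=
  size w < n /\ is_cycle n c /\
  exists q1 r : seq vtx,
    ppath (adjS n w) (sub_top w) q1 /\ last (sub_top w) q1 = sub_bot w /\
    sub_left w \in q1 /\
    ppath (adjS n w) (sub_bot w) (rcons r (sub_top w)) /\
    sub_right w \in r /\
    same_cycle c (sub_top w :: q1 ++ r).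

Definition sub_height (n : nat) (w : seq letter) (h : nat) : Prop :=
  is_dist n (sub_top w) (sub_bot w) h.

From HB Require Import structures.
From mathcomp Require Import all_boot zify.
Set Implicit Arguments. Unset Strict Implicit. Unset Printing Implicit Defensive.

(* Every edge of a subdiamond S that is not itself an edge of D_n lies in one
   of the four children of S, and two children share only ends and midpoints
   of S.  Hence a cycle in S either lies in a child of S or passes through
   both ends of S; in the latter case each of its two top-bottom arcs stays
   in one half of S, so it passes through the midpoint of that half, and the
   cycle is principal.  Descending from D_n to a smallest subdiamond
   containing the cycle gives the first claim.
   A simple top-bottom path of S splits at the midpoint it meets into simple
   top-bottom paths of two children, so it has length 2^(n - depth of S);
   the height of S is the same number, because along each edge the level of
   a vertex (its height when D_n is drawn with vertical edges) changes by 1. *)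

(** * Walks *)

Section Walks.
Variable e : vtx -> vtx -> Prop.

Lemma ppath_cat x p q : ppath e x (p ++ q) <-> ppath e x p /\ ppath e (last x p) q.
Proof. by elim: p x => [|y p IH] x /=; [tauto | rewrite IH; tauto]. Qed.

Lemma ppath_rcons x p y : ppath e x (rcons p y) <-> ppath e x p /\ e (last x p) y.
Proof. by rewrite -cats1 ppath_cat /=; tauto. Qed.

Lemma ppath_sub (e' : vtx -> vtx -> Prop) x p :
  {in x :: p &, forall a b, e a b -> e' a b} -> ppath e x p -> ppath e' x p.
Proof.
elim: p x => [|y p IH] x //= sub_e [exy ep]; split.
  by apply: sub_e; rewrite ?mem_head ?inE ?eqxx ?orbT.
by apply: IH ep => a b Ha Hb; apply: sub_e; rewrite inE ?Ha ?Hb orbT.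
Qed.

Lemma ppath_edge x p y : ppath e x (rcons p y) -> {in x :: p, forall z, exists z', e z z'}.
Proof.
elim: p x => [|a p IH] x /= => [[exy _]|[exa ep]] z.
  by rewrite inE => /eqP->; exists y.
by rewrite inE => /orP [/eqP->|/(IH _ ep)//]; exists a.
Qed.

Lemma ppath_exit (P : pred vtx) x q : ppath e x q -> P x -> ~~ P (last x q) ->
  exists a b, [/\ a \in x :: q, b \in q, e a b, P a & ~~ P b].
Proof.
elim: q x => [|y q IH] x /=; first by move=> _ ->.
move=> [exy eq] Px Pl; case Py: (P y).
  have [a [b [Ha Hb ab Pa Pb]]] := IH y eq Py Pl; exists a, b.
  by split=> //; rewrite inE ?Ha ?Hb orbT.
by exists x, y; rewrite !inE !eqxx Py.
Qed.

Lemma ppath_closed (P : pred vtx) x q : ppath e x q -> P x ->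
  {in x :: q &, forall a b, e a b -> P a -> P b} -> {in x :: q, forall z, P z}.
Proof.
elim: q x => [|y q IH] x /= => [_ Px _ z|[exy eq] Px closedP z].
  by rewrite inE => /eqP->.
have Py : P y by apply: closedP exy Px; rewrite !inE eqxx ?orbT.
rewrite inE => /orP [/eqP->//|].
by apply: IH eq Py _ z => a b Ha Hb; apply: closedP; rewrite inE ?Ha ?Hb orbT.
Qed.

Lemma ppath_rot x p y : ppath e x (rcons p x) -> y \in x :: p ->
  exists k p', [/\ k < size (x :: p), rot k (x :: p) = y :: p' & ppath e y (rcons p' y)].
Proof.
move=> ex; rewrite inE => /orP [/eqP->|Hy]; first by exists 0, p; rewrite rot0.
case/splitPr: Hy ex => A B ex; exists (size A).+1, (B ++ x :: A); split.
- by rewrite /= size_cat /=; lia.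
- by rewrite /rot /= drop_size_cat // take_size_cat.
have [eA [eAy eB]] : ppath e x A /\ e (last x A) y /\ ppath e y (rcons B x).
  by move: ex; rewrite rcons_cat ppath_cat.
have [eB' eBx] := (ppath_rcons _ _ _).1 eB.
by rewrite rcons_cat ppath_cat /=; split=> //; split=> //; rewrite -cats1 ppath_cat.
Qed.

Hypothesis e_sym : forall a b, e a b -> e b a.

Lemma ppath_rev x q y : ppath e x (rcons q y) -> ppath e y (rcons (rev q) x).
Proof.
elim: q x => [|a q IH] x /= => [[exy _]|[exa eq]]; first by split=> //; apply: e_sym.
by rewrite rev_cons ppath_rcons last_rcons; split; [apply: IH | apply: e_sym].
Qed.

(* If some [z] were outside [P] and distinct from [K], both arcs of the
   cycle between [y] and [z] would leave [P], hence pass through [K]. *)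
Lemma cycle_cut (P : pred vtx) K x p : ppath e x (rcons p x) -> uniq (x :: p) ->
  {in x :: p &, forall a b, e a b -> P a -> ~~ P b -> b = K} ->
  {in x :: p, forall y, P y -> {in x :: p, forall z, P z || (z == K)}}.
Proof.
move=> ex ux exitK y Hy Py z Hz; apply/negPn/negP; rewrite negb_or => /andP [Pz zK].
have [k [p' [_ rot_y ey]]] := ppath_rot ex Hy.
have sub_y : {subset y :: p' <= x :: p} by move=> w; rewrite -rot_y mem_rot.
have uy : uniq (y :: p') by rewrite -rot_y rot_uniq.
have : z \in y :: p' by rewrite -rot_y mem_rot.
rewrite inE => /orP [/eqP zy|Hz']; first by rewrite zy Py in Pz.
case/splitPr: Hz' ey uy sub_y => A B ey uy sub_y.
have [eA [eAz eB]] : ppath e y A /\ e (last y A) z /\ ppath e z (rcons B y).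
  by move: ey; rewrite rcons_cat ppath_cat.
have exit_at_K q : {subset q <= A ++ z :: B} -> ppath e y (rcons q z) -> K \in q.
  move=> sub_q eq; have := ppath_exit eq Py; rewrite last_rcons.
  move=> /(_ Pz) [a [b [Ha Hb ab Pa Pb]]].
  have sub_yqz : {subset y :: rcons q z <= x :: p}.
    move=> w Hw; apply: sub_y; move: Hw; rewrite inE mem_rcons inE.
    case/or3P=> [/eqP->|/eqP->|/sub_q Hw]; first exact: mem_head.
      by rewrite inE mem_cat inE eqxx !orbT.
    by rewrite inE Hw orbT.
  have bK : b = K.
    by apply: (exitK a b) ab Pa Pb; apply: sub_yqz; rewrite // inE Hb orbT.
  by move: Hb; rewrite mem_rcons inE bK eq_sym (negbTE zK).
have KA : K \in A.
  by apply: exit_at_K; [move=> w Hw; rewrite mem_cat Hw | rewrite ppath_rcons].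
have KB : K \in rev B.
  by apply: exit_at_K (ppath_rev eB) => w; rewrite mem_rev mem_cat inE => ->; rewrite !orbT.
move: uy; rewrite cons_uniq cat_uniq => /andP [_ /and3P [_ /hasPn/(_ K)]].
by rewrite inE -mem_rev KB orbT KA => /(_ isT).
Qed.

End Walks.

(** * Ends and levels of subdiamonds *)

Lemma ends_aux_cat pre uv v z :
  ends_aux pre uv (v ++ z) = ends_aux (pre ++ v) (ends_aux pre uv v) z.
Proof.
by elim: v pre uv => [|[s lo] v IH] pre uv /=; rewrite ?cats0 // IH cat_rcons.
Qed.

(* The vertex of the subdiamond with word [pre] and ends [uv] corresponding
   to the vertex [x] of a diamond graph. *)
Definition graft (pre : seq letter) (uv : vtx * vtx) (x : vtx) : vtx :=
  match x with Top => uv.1 | Bot => uv.2 | Mid q s => Mid (pre ++ q) s end.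

Lemma ends_aux_graft pre uv0 w q uv :
  ends_aux (pre ++ q) (graft pre uv0 uv.1, graft pre uv0 uv.2) w =
  (graft pre uv0 (ends_aux q uv w).1, graft pre uv0 (ends_aux q uv w).2).
Proof.
elim: w q uv => [|[s lo] w IH] q uv //=.
by rewrite -IH -rcons_cat; case: lo.
Qed.

Lemma ends_cat v z :
  ends (v ++ z) = (graft v (ends v) (sub_top z), graft v (ends v) (sub_bot z)).
Proof.
rewrite /ends ends_aux_cat /= -ends_aux_graft cats0.
by case: (ends_aux [::] (Top, Bot) v).
Qed.

Lemma sub_top_rcons v s lo : sub_top (rcons v (s, lo)) = if lo then Mid v s else sub_top v.
Proof. by rewrite /sub_top -cats1 ends_cat; case: lo; rewrite /= ?cats0. Qed.

Lemma sub_bot_rcons v s lo : sub_bot (rcons v (s, lo)) = if lo then sub_bot v else Mid v s.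
Proof. by rewrite /sub_bot -cats1 ends_cat; case: lo; rewrite /= ?cats0. Qed.

Lemma sub_ends_shape w x : x = sub_top w \/ x = sub_bot w ->
  [\/ x = Top, x = Bot | exists k s, k < size w /\ x = Mid (take k w) s].
Proof.
rewrite /sub_top /sub_bot /ends.
have : forall pre uv, x = (ends_aux pre uv w).1 \/ x = (ends_aux pre uv w).2 ->
    [\/ x = uv.1, x = uv.2 | exists k s, k < size w /\ x = Mid (pre ++ take k w) s].
  elim: w => [|[s lo] w IH] pre uv /=; first by case; [constructor 1 | constructor 2].
  move=> /IH [->|->|[k [s' [lt_k ->]]]].
  - by case: lo; [constructor 3; exists 0, s; rewrite take0 cats0 | constructor 1].
  - by case: lo; [constructor 2 | constructor 3; exists 0, s; rewrite take0 cats0].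
  - by constructor 3; exists k.+1, s'; rewrite -cat_rcons -cats1 -catA.
by move=> shape /shape.
Qed.

(* [level n x] is the height of [x] in D_n drawn with the top at height 0 and
   every edge of vertical length 1: replacing an edge of D_k whose upper end
   has height h creates midpoints at height h + 2^(n-k-1). *)
Fixpoint word_level (n : nat) (w : seq letter) : nat :=
  match w with
  | [::] => 0
  | (s, lo) :: w' => (if lo then 2 ^ n.-1 else 0) + word_level n.-1 w'
  end.

Definition level (n : nat) (x : vtx) : nat :=
  match x with
  | Top => 0
  | Bot => 2 ^ n
  | Mid m s => word_level n m + 2 ^ (n - size m).-1
  end.

Lemma word_level_rcons n pre s lo : word_level n (rcons pre (s, lo)) =
  word_level n pre + (if lo then 2 ^ (n - size pre).-1 else 0).
Proof.
elim: pre n => [|[s' lo'] pre IH] n /=; first by rewrite subn0 addn0.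
by rewrite IH addnA; congr (_ + _ + (if lo then 2 ^ _ else 0)); lia.
Qed.

Lemma level_ends_aux n pre uv w : size pre + size w <= n ->
  level n uv.1 = word_level n pre ->
  level n uv.2 = word_level n pre + 2 ^ (n - size pre) ->
  level n (ends_aux pre uv w).1 = word_level n (pre ++ w) /\
  level n (ends_aux pre uv w).2 = word_level n (pre ++ w) + 2 ^ (n - size (pre ++ w)).
Proof.
elim: w pre uv => [|[s lo] w IH] pre uv /=; first by rewrite cats0.
move=> le_n lev1 lev2; rewrite -cat_rcons.
have half : 2 ^ (n - size pre) = 2 ^ (n - size pre).-1 + 2 ^ (n - size pre).-1.
  by rewrite addnn -mul2n -expnS prednK // subn_gt0; lia.
apply: IH; rewrite ?size_rcons ?word_level_rcons; first lia.
  by case: lo; rewrite /= ?addn0 // addnC.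
rewrite subnS; case: lo => /=; last by rewrite addn0.
by rewrite lev2 half addnA.
Qed.

Lemma level_sub_bot n w : size w <= n ->
  level n (sub_bot w) = level n (sub_top w) + 2 ^ (n - size w).
Proof.
move=> le_wn.
have lev_bot : level n Bot = 0 + 2 ^ (n - 0) by rewrite subn0.
by have [-> ->] := @level_ends_aux n [::] (Top, Bot) w le_wn erefl lev_bot.
Qed.

Lemma sub_top_neq_bot w : sub_top w != sub_bot w.
Proof.
apply/eqP => E; have := @level_sub_bot (size w) w (leqnn _).
by rewrite E subnn expn0; lia.
Qed.

Lemma adjS_irrefl n v a : ~ adjS n v a a.
Proof.
move=> [u [_ [_ E]]]; have := sub_top_neq_bot u.
by rewrite /sub_top /sub_bot; case: E => ->; rewrite eqxx.
Qed.

Lemma adjS_sym n v a b : adjS n v a b -> adjS n v b a.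
Proof. by move=> [u [? [? E]]]; exists u; do 2!split=> //; tauto. Qed.

Lemma level_adj n x y : adj n x y -> level n y <= level n x + 1.
Proof.
move=> [u [size_u E]]; have := @level_sub_bot n u (eq_leq size_u).
by rewrite /sub_top /sub_bot size_u subnn expn0; case: E => -> /=; lia.
Qed.

Lemma level_walk n x p : ppath (adj n) x p -> level n (last x p) <= level n x + size p.
Proof.
elim: p x => [|y p IH] x /= => [_|[/level_adj xy /IH]]; first by rewrite addn0.
lia.
Qed.

Lemma sub_dist_ge n w p : size w <= n ->
  ppath (adj n) (sub_top w) p -> last (sub_top w) p = sub_bot w ->
  2 ^ (n - size w) <= size p.
Proof. by move=> le_wn /level_walk + last_p; rewrite last_p level_sub_bot //; lia. Qed.

(** * Vertices relative to a subdiamond *)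

(* The position of a vertex relative to the subdiamond [v]: an end, a
   midpoint, an interior vertex of the child [rcons v (s, lo)], or outside. *)
Inductive vclass := CTop | CBot | CMid of bool | CIn of bool & bool | COut.

Definition vclass_code (k : vclass) : nat * letter :=
  match k with
  | CTop => (0, (false, false)) | CBot => (1, (false, false))
  | CMid s => (2, (s, false)) | CIn s lo => (3, (s, lo)) | COut => (4, (false, false))
  end.
Definition vclass_decode (c : nat * letter) : vclass :=
  match c with
  | (0, _) => CTop | (1, _) => CBot | (2, (s, _)) => CMid s
  | (3, (s, lo)) => CIn s lo | _ => COut
  end.
Lemma vclass_codeK : cancel vclass_code vclass_decode. Proof. by case. Qed.
HB.instance Definition _ := Equality.copy vclass (can_type vclass_codeK).

Definition vclass_of (v : seq letter) (x : vtx) : vclass :=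
  if x == sub_top v then CTop else if x == sub_bot v then CBot else
  if x is Mid m s then
    if m == v then CMid s
    else if (size v < size m) && (take (size v) m == v) then
      CIn (nth (true, true) m (size v)).1 (nth (true, true) m (size v)).2
    else COut
  else COut.

Definition corner (lo : bool) : vclass := if lo then CBot else CTop.
Definition sub_corner (v : seq letter) (lo : bool) : vtx :=
  if lo then sub_bot v else sub_top v.

Definition in_child (a : letter) (k : vclass) : bool :=
  [|| k == corner a.2, k == CMid a.1 | k == CIn a.1 a.2].

Definition in_interior (s : bool) (k : vclass) : bool :=
  (k == CIn s false) || (k == CIn s true).

Definition in_half (s : bool) (k : vclass) : bool := (k == CMid s) || in_interior s k.

Definition is_point (k : vclass) : bool :=
  match k with CTop | CBot | CMid _ => true | _ => false end.

Lemma in_child_shared a b k k' : a != b -> in_child a k -> in_child b k ->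
  in_child a k' -> in_child b k' -> k = k' /\ is_point k.
Proof.
by case: a b => [s1 l1] [s2 l2]; case: k k' => [| |[]|[] []|] [| |[]|[] []|];
  case: s1 l1 s2 l2 => [] [] [] [].
Qed.

Lemma in_child_exit_half c k k' s : in_child c k -> in_child c k' ->
  in_half s k -> ~~ in_half s k' -> exists lo, k' = corner lo.
Proof.
case: c => [[] []]; case: s; case: k => [| |[]|[] []|]; case: k' => [| |[]|[] []|] //=;
  by [exists false | exists true].
Qed.

Lemma in_child_top_bot c : in_child c CTop -> in_child c CBot -> False.
Proof. by case: c => [? []]. Qed.

Lemma in_child_half c k : in_child c k -> k != CTop -> k != CBot -> in_half c.1 k.
Proof. by case: c => [[] []]; case: k => [| |[]|[] []|]. Qed.

Lemma in_child_interior c s k k' : in_child c k -> in_child c k' ->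
  in_interior s k -> in_interior s k' -> k = k'.
Proof.
by case: c => [[] []]; case: s; case: k => [| |[]|[] []|]; case: k' => [| |[]|[] []|].
Qed.

Lemma in_child_corner_interior c lo s k : in_child c (corner lo) -> in_child c k ->
  in_interior s k -> k = CIn s lo.
Proof. by case: c => [[] []]; case: lo; case: s; case: k => [| |[]|[] []|]. Qed.

Lemma in_child_interior_exit c s lo k : in_child c (CIn s lo) -> in_child c k ->
  k != CIn s lo -> k = CMid s \/ k = corner lo.
Proof. by case: c => [[] []]; case: s; case: lo; case: k => [| |[]|[] []|]; auto. Qed.

Lemma in_half_child s lo k : in_half s k -> k != CIn s lo -> in_child (s, ~~ lo) k.
Proof. by case: s; case: lo; case: k => [| |[]|[] []|]. Qed.

Lemma mid_not_sub_end v m s : size v <= size m ->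
  Mid m s != sub_top v /\ Mid m s != sub_bot v.
Proof.
have not_end x : x = sub_top v \/ x = sub_bot v -> size v <= size m -> Mid m s != x.
  case/sub_ends_shape=> [->|->|[k [s' [lt_kv ->]]]] // le_vm.
  by apply/eqP => -[/(congr1 size)]; rewrite size_take; case: ifP; lia.
by move=> le_vm; split; apply: not_end; auto.
Qed.

Lemma vclass_top v : vclass_of v (sub_top v) = CTop.
Proof. by rewrite /vclass_of eqxx. Qed.

Lemma vclass_bot v : vclass_of v (sub_bot v) = CBot.
Proof. by rewrite /vclass_of eq_sym (negbTE (sub_top_neq_bot v)) eqxx. Qed.

Lemma vclass_sub_corner v lo : vclass_of v (sub_corner v lo) = corner lo.
Proof. by case: lo; rewrite /= ?vclass_top ?vclass_bot. Qed.

Lemma vclass_mid v s : vclass_of v (Mid v s) = CMid s.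
Proof.
have [/negbTE nt /negbTE nb] := mid_not_sub_end s (leqnn (size v)).
by rewrite /vclass_of nt nb eqxx.
Qed.

Lemma vclass_interior v a t s : vclass_of v (Mid (v ++ a :: t) s) = CIn a.1 a.2.
Proof.
have lt_v : size v < size (v ++ a :: t) by rewrite size_cat /=; lia.
have [/negbTE nt /negbTE nb] := mid_not_sub_end s (ltnW lt_v).
have /negbTE nv : v ++ a :: t != v by apply/eqP => E; rewrite E ltnn in lt_v.
by rewrite /vclass_of nt nb nv lt_v take_size_cat //= eqxx nth_cat ltnn subnn.
Qed.

Lemma vclass_cornerE v x lo : vclass_of v x = corner lo -> x = sub_corner v lo.
Proof.
rewrite /vclass_of; case: eqP => [->|_]; first by case: lo => /eqP.
case: eqP => [->|_]; first by case: lo => /eqP.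
by case: x => [| |m s]; [| | case: (m == v); [| case: ifP]]; case: lo => /eqP.
Qed.

Lemma vclass_midE v x s : vclass_of v x = CMid s -> x = Mid v s.
Proof.
rewrite /vclass_of; case: eqP => // _; case: eqP => // _; case: x => // m s'.
by case: eqP => [-> [->]|_] //; case: ifP.
Qed.

Lemma vclass_point v x y : vclass_of v x = vclass_of v y -> is_point (vclass_of v x) -> x = y.
Proof.
case E: (vclass_of v x) => [| |s| |] // E' _.
- by rewrite (vclass_cornerE (lo := false) E) (vclass_cornerE (lo := false) (esym E')).
- by rewrite (vclass_cornerE (lo := true) E) (vclass_cornerE (lo := true) (esym E')).
- by rewrite (vclass_midE E) (vclass_midE (esym E')).
Qed.

Lemma in_half_interior v s z : in_half s (vclass_of v z) -> z != Mid v s ->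
  in_interior s (vclass_of v z).
Proof. by case/orP => [/eqP/vclass_midE->|//]; rewrite eqxx. Qed.

Lemma in_child_sub_end v a z x : x = sub_top (rcons v a ++ z) \/ x = sub_bot (rcons v a ++ z) ->
  in_child a (vclass_of v x).
Proof.
have end_child y : y = sub_top z \/ y = sub_bot z ->
    in_child a (vclass_of v (graft (rcons v a) (ends (rcons v a)) y)).
  case: a => s lo; case/sub_ends_shape=> [->|->|[k [s' [_ ->]]]] /=.
  - rewrite -/(sub_top _) sub_top_rcons.
    by case: lo; rewrite ?vclass_mid ?vclass_top /in_child /= ?eqxx ?orbT.
  - rewrite -/(sub_bot _) sub_bot_rcons.
    by case: lo; rewrite ?vclass_mid ?vclass_bot /in_child /= ?eqxx ?orbT.
  - by rewrite cat_rcons vclass_interior /in_child !eqxx !orbT.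
by rewrite /sub_top /sub_bot ends_cat /=; case=> ->; apply: end_child; auto.
Qed.

Section Children.
Variables (n : nat) (v : seq letter).
Hypothesis lt_vn : size v < n.

Lemma adjS_child x y : adjS n v x y -> exists a,
  [/\ in_child a (vclass_of v x), in_child a (vclass_of v y) & adjS n (rcons v a) x y].
Proof.
move=> [u [size_u [pre_u E]]]; set a := nth (true, true) u (size v).
have pre_u' : take (size v).+1 u = rcons v a.
  by rewrite (take_nth (true, true)) ?pre_u // size_u.
have Eu : u = rcons v a ++ drop (size v).+1 u by rewrite -pre_u' cat_take_drop.
exists a; split; last by exists u; rewrite size_rcons pre_u'.
all: apply: (@in_child_sub_end _ _ (drop (size v).+1 u)).
all: by rewrite -Eu /sub_top /sub_bot; case: E => ->; auto.
Qed.

Lemma adjS_rcons a x y : adjS n v x y ->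
  in_child a (vclass_of v x) -> in_child a (vclass_of v y) -> adjS n (rcons v a) x y.
Proof.
move=> xy ax ay; have [b [bx by_ xy_b]] := adjS_child xy.
case: (eqVneq a b) => [->//|ab].
have [E pt] := in_child_shared ab ax bx ay by_.
by move: xy; rewrite (vclass_point E pt) => /adjS_irrefl.
Qed.

Lemma adjS_half x y : adjS n v x y -> x != sub_top v -> x != sub_bot v ->
  exists s, in_half s (vclass_of v x).
Proof.
move=> /adjS_child [c [cx _ _]] xt xb; exists c.1; apply: (in_child_half cx); apply/eqP.
- by move=> /(@vclass_cornerE _ _ false) E; rewrite E eqxx in xt.
- by move=> /(@vclass_cornerE _ _ true) E; rewrite E eqxx in xb.
Qed.

End Children.

(** * Top-bottom paths *)

Section SubdiamondPaths.
Variables (n : nat) (v : seq letter).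
Hypothesis lt_vn : size v < n.
Local Notation e := (adjS n v).
Local Notation cls := (vclass_of v).

Lemma ppath_interior_vclass s y t : ppath e y t ->
  {in y :: t, forall z, in_interior s (cls z)} -> {in y :: t, forall z, cls z = cls y}.
Proof.
move=> ep int_t z Hz; apply/eqP; move: z Hz; apply: ppath_closed ep _ _ => // a b Ha Hb ab /eqP <-.
have [c [ca cb _]] := adjS_child lt_vn ab.
by rewrite (in_child_interior ca cb (int_t a Ha) (int_t b Hb)).
Qed.

Lemma top_bot_path_mid p : ppath e (sub_top v) (rcons p (sub_bot v)) ->
  sub_top v \notin p -> sub_bot v \notin p ->
  exists s, {in p, forall z, in_half s (cls z)} /\ Mid v s \in p.
Proof.
case: p => [/= [/(adjS_child lt_vn) [c [] ] ]|y t].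
  by rewrite vclass_top vclass_bot => /in_child_top_bot.
rewrite /= ppath_rcons => -[ty [et tb]] top_yt bot_yt.
have [s half_y] : exists s, in_half s (cls y).
  apply: (adjS_half lt_vn (adjS_sym ty));
    [apply: contraNneq top_yt | apply: contraNneq bot_yt] => <-; exact: mem_head.
exists s; have half_t : {in y :: t, forall z, in_half s (cls z)}.
  apply: ppath_closed et half_y _ => a b Ha Hb ab half_a; apply/negPn/negP => half_b.
  have [c' [ca cb _]] := adjS_child lt_vn ab.
  have [lo /vclass_cornerE E] := in_child_exit_half ca cb half_a half_b.
  by case: lo E => /= E; [move: bot_yt | move: top_yt]; rewrite -E Hb.
split=> //; apply/negPn/negP => mid_t.
have int_t : {in y :: t, forall z, in_interior s (cls z)}.
  move=> z Hz; have /orP [/eqP/vclass_midE Ez|//] := half_t z Hz.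
  by rewrite -Ez Hz in mid_t.
have [c [ct cy _]] := adjS_child lt_vn ty; rewrite vclass_top in ct.
have [c' [cl cb _]] := adjS_child lt_vn tb; rewrite vclass_bot in cb.
have := ppath_interior_vclass et int_t (mem_last y t).
rewrite (in_child_corner_interior (lo := true) cb cl (int_t _ (mem_last y t))).
by rewrite (in_child_corner_interior (lo := false) ct cy (int_t _ (mem_head y t))).
Qed.

Lemma corner_mid_path_child lo s p :
  ppath e (sub_corner v lo) (rcons p (Mid v s)) -> {in p, forall z, in_interior s (cls z)} ->
  ppath (adjS n (rcons v (s, lo))) (sub_corner v lo) (rcons p (Mid v s)).
Proof.
move=> ep int_p.
have in_child_p : {in p, forall z, in_child (s, lo) (cls z)}.
  case: p ep int_p => [//|y t] /= [cy et] int_p.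
  have [c [cc ccy _]] := adjS_child lt_vn cy; rewrite vclass_sub_corner in cc.
  have cls_y := in_child_corner_interior cc ccy (int_p y (mem_head y t)).
  have [et' _] := (ppath_rcons _ _ _ _).1 et.
  by move=> z Hz; rewrite (ppath_interior_vclass et' int_p Hz) cls_y /in_child /= eqxx !orbT.
have in_child_all : {in sub_corner v lo :: rcons p (Mid v s), forall z, in_child (s, lo) (cls z)}.
  move=> z; rewrite inE mem_rcons inE => /or3P [/eqP->|/eqP->|/in_child_p//].
    by rewrite vclass_sub_corner /in_child /= eqxx.
  by rewrite vclass_mid /in_child /= eqxx orbT.
by apply: ppath_sub ep => a b Ha Hb ab; apply: (adjS_rcons lt_vn ab); apply: in_child_all.
Qed.

End SubdiamondPaths.

Lemma adjS_leaf n v a b : size v = n -> adjS n v a b ->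
  (a = sub_top v /\ b = sub_bot v) \/ (a = sub_bot v /\ b = sub_top v).
Proof.
move=> size_v [u [size_u [pre_u E]]].
have Euv : u = v by rewrite -pre_u size_v -size_u take_size.
by rewrite /sub_top /sub_bot -Euv; case: E => ->; auto.
Qed.

Lemma leaf_path_size n v p : size v = n ->
  ppath (adjS n v) (sub_top v) p -> last (sub_top v) p = sub_bot v ->
  uniq (sub_top v :: p) -> size p = 1.
Proof.
move=> size_v; have tb := sub_top_neq_bot v.
case: p => [_ /= E|y [|z q]] //=; first by rewrite E eqxx in tb.
case=> /(adjS_leaf size_v) [[_ ->]|[E _]]; last by rewrite E eqxx in tb.
case=> /(adjS_leaf size_v) [[E _]|[_ ->]]; first by rewrite E eqxx in tb.
by rewrite !inE eqxx !orbT.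
Qed.

Lemma sub_path_size n v p : size v <= n ->
  ppath (adjS n v) (sub_top v) p -> last (sub_top v) p = sub_bot v ->
  uniq (sub_top v :: p) -> size p = 2 ^ (n - size v).
Proof.
move Ek : (n - size v) => k; elim: k v Ek p => [|k IH] v Ek p le_vn.
  by move/leaf_path_size => H /H H' /H' ->; lia.
have lt_vn : size v < n by lia.
have tb := sub_top_neq_bot v.
case/lastP: p => [_ /= E|p bot]; first by rewrite E eqxx in tb.
rewrite last_rcons => ep Ebot up; subst bot.
have [top_p bot_p] : sub_top v \notin p /\ sub_bot v \notin p.
  move: up; rewrite cons_uniq mem_rcons inE negb_or rcons_uniq.
  by case/andP=> /andP [_ ->] /andP [->].
have [s [half_p mid_p]] := top_bot_path_mid lt_vn ep top_p bot_p.
case/splitPr: mid_p ep up half_p => A B ep up half_AB.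
have [eA [eAM eB]] : ppath (adjS n v) (sub_top v) A /\ adjS n v (last (sub_top v) A) (Mid v s) /\
    ppath (adjS n v) (Mid v s) (rcons B (sub_bot v)).
  by move: ep; rewrite rcons_cat ppath_cat.
move: up; rewrite rcons_cat -cat_cons cat_uniq => /and3P [uA /hasPn not_mid_A uB].
have notin_A : Mid v s \notin sub_top v :: A by apply: not_mid_A; rewrite mem_head.
have int_A : {in A, forall z, in_interior s (vclass_of v z)}.
  move=> z Hz; apply: in_half_interior; first by apply: half_AB; rewrite mem_cat Hz.
  by apply/eqP => Ez; move: notin_A; rewrite -Ez inE Hz orbT.
have int_B : {in rev B, forall z, in_interior s (vclass_of v z)}.
  move=> z; rewrite mem_rev => Hz; apply: in_half_interior.
    by apply: half_AB; rewrite mem_cat inE Hz !orbT.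
  by apply/eqP => Ez; move: uB; rewrite cons_uniq mem_rcons inE -Ez Hz orbT.
have eAM' : ppath (adjS n v) (sub_top v) (rcons A (Mid v s)) by rewrite ppath_rcons.
have eA' := corner_mid_path_child (lo := false) lt_vn eAM' int_A.
have eB' := ppath_rev (@adjS_sym _ _)
  (corner_mid_path_child (lo := true) lt_vn (ppath_rev (@adjS_sym _ _) eB) int_B).
rewrite revK in eB'.
have size_A : size (rcons A (Mid v s)) = 2 ^ k.
  apply: (IH (rcons v (s, false)));
    rewrite ?size_rcons ?sub_top_rcons ?sub_bot_rcons ?last_rcons //; try lia.
  by rewrite -rcons_cons rcons_uniq notin_A.
have size_B : size (rcons B (sub_bot v)) = 2 ^ k.
  by apply: (IH (rcons v (s, true)));
    rewrite ?size_rcons ?sub_top_rcons ?sub_bot_rcons ?last_rcons //; lia.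
by move: size_A size_B; rewrite !size_rcons size_cat /= size_rcons expnS; lia.
Qed.

(** * Cycles *)

Lemma same_cycle_rot k c : same_cycle c (rot k c).
Proof. by exists (size c - k); left; rewrite -(size_rot k) -/(rotr k _) rotK. Qed.

Lemma same_cycle_rev_rot k c : same_cycle c (rev (rot k c)).
Proof. by have [j [E|E]] := same_cycle_rot k c; exists j; rewrite revK; auto. Qed.

Section Cycles.
Variables (n : nat) (v : seq letter) (x : vtx) (p : seq vtx).
Hypotheses (lt_vn : size v < n) (ex : ppath (adjS n v) x (rcons p x)) (ux : uniq (x :: p)).
Local Notation cls := (vclass_of v).

Lemma cycle_in_child a : {in x :: p, forall z, in_child a (cls z)} ->
  ppath (adjS n (rcons v a)) x (rcons p x).
Proof.
move=> in_a; have sub_c : {subset x :: rcons p x <= x :: p}.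
  by move=> z; rewrite !inE mem_rcons inE orbA orbb.
apply: ppath_sub ex => b c /sub_c Hb /sub_c Hc bc.
exact: (adjS_rcons lt_vn bc (in_a b Hb) (in_a c Hc)).
Qed.

(* A cycle avoiding the corner [lo] of [v] is confined to the half of [v]
   containing one of its vertices, plus the opposite corner; it then lies in
   the child of that half containing the corner [lo] if it meets its
   interior, and in the other child otherwise. *)
Lemma corner_or_child lo : 3 <= size (x :: p) ->
  sub_corner v lo \in x :: p \/ exists a, ppath (adjS n (rcons v a)) x (rcons p x).
Proof.
move=> size_p; case Hlo: (sub_corner v lo \in x :: p); [by left | right].
have not_lo : {in x :: p, forall z, cls z != corner lo}.
  by move=> z Hz; apply/eqP => /vclass_cornerE E; rewrite -E Hz in Hlo.
set K := sub_corner v (~~ lo).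
have [y Hy yK] : exists2 y, y \in x :: p & y != K.
  case: p ux size_p => [|y0 [|y1 t]] // /andP [x_t _] _.
  case: (eqVneq x K) => [xK|]; last by exists x; rewrite ?mem_head.
  by exists y0; rewrite ?inE ?eqxx ?orbT // -xK; apply: contraNneq x_t => ->; rewrite mem_head.
have [s half_y] : exists s, in_half s (cls y).
  have [y' yy'] := ppath_edge ex Hy.
  apply: (adjS_half lt_vn yy'); apply/eqP => E; move: (not_lo y Hy) yK; rewrite /K E;
    by case: (lo) => /=; rewrite ?vclass_top ?vclass_bot ?eqxx.
have exit_K : {in x :: p &, forall a b, adjS n v a b ->
    in_half s (cls a) -> ~~ in_half s (cls b) -> b = K}.
  move=> a b _ Hb ab half_a half_b; have [c [ca cb _]] := adjS_child lt_vn ab.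
  have [lo' E] := in_child_exit_half ca cb half_a half_b.
  have /negPf lo'lo : lo' != lo by apply: contraNneq (not_lo b Hb) => <-; rewrite E.
  by rewrite /K (vclass_cornerE E); case: (lo) (lo') lo'lo => -[].
have half_or_K := cycle_cut (@adjS_sym _ _) ex ux exit_K Hy half_y.
case: (boolP (has (fun z => cls z == CIn s lo) (x :: p))) => [|/hasPn no_int].
  case/hasP=> z0 Hz0 int_z0.
  have exit_mid : {in x :: p &, forall a b, adjS n v a b ->
      cls a == CIn s lo -> cls b != CIn s lo -> b = Mid v s}.
    move=> a b _ Hb ab /eqP int_a int_b; have [c [ca cb _]] := adjS_child lt_vn ab.
    rewrite int_a in ca; have [/vclass_midE //|E] := in_child_interior_exit ca cb int_b.
    by move: (not_lo b Hb); rewrite E eqxx.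
  exists (s, lo); apply: cycle_in_child => z Hz.
  case/orP: (cycle_cut (@adjS_sym _ _) ex ux exit_mid Hz0 int_z0 Hz) => /eqP->.
  - by rewrite /in_child /= eqxx !orbT.
  - by rewrite vclass_mid /in_child /= eqxx orbT.
exists (s, ~~ lo); apply: cycle_in_child => z Hz.
case/orP: (half_or_K z Hz) => [half_z|/eqP->]; last first.
  by rewrite vclass_sub_corner /in_child /= eqxx.
exact: in_half_child half_z (no_int z Hz).
Qed.

Lemma principal_arcs : sub_top v \in x :: p -> sub_bot v \in x :: p ->
  exists q1 r : seq vtx,
    ppath (adjS n v) (sub_top v) q1 /\ last (sub_top v) q1 = sub_bot v /\
    sub_left v \in q1 /\
    ppath (adjS n v) (sub_bot v) (rcons r (sub_top v)) /\
    sub_right v \in r /\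
    same_cycle (x :: p) (sub_top v :: q1 ++ r).
Proof.
move=> top_c bot_c; have [k [p' [lt_k rot_c et]]] := ppath_rot ex top_c.
have /negPf tb := sub_top_neq_bot v.
have bot_p' : sub_bot v \in p' by move: bot_c; rewrite -(mem_rot k) rot_c inE eq_sym tb.
case/splitPr: bot_p' rot_c et => p1 p2 rot_c et.
have [e1 [e1b e2]] : ppath (adjS n v) (sub_top v) p1 /\
    adjS n v (last (sub_top v) p1) (sub_bot v) /\
    ppath (adjS n v) (sub_bot v) (rcons p2 (sub_top v)).
  by move: et; rewrite rcons_cat ppath_cat.
have e1' : ppath (adjS n v) (sub_top v) (rcons p1 (sub_bot v)) by rewrite ppath_rcons.
have e2' := ppath_rev (@adjS_sym _ _) e2.
have := ux; rewrite -(rot_uniq k) rot_c cons_uniq mem_cat inE tb negb_or /=.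
case/andP=> /andP [top_p1 top_p2]; rewrite cat_uniq cons_uniq.
case/and3P=> _ /hasPn p1_p2 /andP [bot_p2 _].
have bot_p1 : sub_bot v \notin p1 by apply: contraTN (p1_p2 _ (mem_head _ _)) => ->.
have [s1 [_ mid_p1]] := top_bot_path_mid lt_vn e1' top_p1 bot_p1.
have := top_bot_path_mid lt_vn e2'; rewrite !mem_rev => /(_ top_p2 bot_p2) [s2 [_]].
rewrite mem_rev => mid_p2.
have : s1 != s2.
  by apply: contraTneq mid_p1 => ->; apply: p1_p2; rewrite inE mid_p2 orbT.
case: s1 s2 mid_p1 mid_p2 => -[] // mid_p1 mid_p2 _.
- exists (rcons (rev p2) (sub_bot v)), (rev p1).
  do 5?split; rewrite ?last_rcons ?mem_rcons ?inE ?mem_rev /sub_left /sub_right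
    ?mid_p1 ?mid_p2 ?orbT //.
    exact: (ppath_rev (@adjS_sym n v) e1').
  have -> : sub_top v :: rcons (rev p2) (sub_bot v) ++ rev p1 = rev (rot k.+1 (x :: p)).
    by rewrite -add1n rotD // rot_c rot1_cons rev_rcons rev_cat rev_cons.
  exact: same_cycle_rev_rot.
- exists (rcons p1 (sub_bot v)), p2.
  do 5?split; rewrite ?last_rcons ?mem_rcons ?inE /sub_left /sub_right
    ?mid_p1 ?mid_p2 ?orbT //.
  by rewrite cat_rcons -rot_c; apply: same_cycle_rot.
Qed.

End Cycles.

Lemma leaf_cycle_size n v x p : size v = n ->
  ppath (adjS n v) x (rcons p x) -> uniq (x :: p) -> size p <= 1.
Proof.
move=> size_v; case: p => [|y1 [|y2 t]] //= [xy1 [y1y2 _]].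
have tb := sub_top_neq_bot v; suff -> : x = y2 by rewrite !inE eqxx !orbT.
have [[-> Ey1]|[-> Ey1]] := adjS_leaf size_v xy1;
  have [[Ey1' ->]|[Ey1' ->]] := adjS_leaf size_v y1y2 => //;
  by rewrite -Ey1 -Ey1' eqxx in tb.
Qed.

Lemma cycle_principal n c : is_cycle n c -> exists w, size w <= n /\ principal_cycle n w c.
Proof.
move=> cyc; have [size_c [uc [x [p [Ec ex]]]]] := cyc; rewrite Ec in size_c uc cyc *.
suff : forall v, size v <= n -> ppath (adjS n v) x (rcons p x) ->
    exists w, size w <= n /\ principal_cycle n w (x :: p).
  move/(_ [::]); apply=> //; apply: ppath_sub ex => a b _ _ [u [size_u E]].
  by exists u; rewrite take0.
move=> v; move Ek : (n - size v) => k; elim: k v Ek => [|k IH] v Ek le_vn exv.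
  have size_v : size v = n by lia.
  by have := leaf_cycle_size size_v exv uc; move: size_c => /=; lia.
have lt_vn : size v < n by lia.
have child_IH a : ppath (adjS n (rcons v a)) x (rcons p x) ->
    exists w, size w <= n /\ principal_cycle n w (x :: p).
  by apply: (IH (rcons v a)); rewrite size_rcons; lia.
have [top_c|[a /child_IH //]] := corner_or_child lt_vn exv uc false size_c.
have [bot_c|[a /child_IH //]] := corner_or_child lt_vn exv uc true size_c.
exists v; split; first lia.
by do 2!split=> //; apply: principal_arcs.
Qed.

Lemma same_cycle_perm c d : same_cycle c d -> perm_eq c d.
Proof. by case=> k [->|->]; rewrite perm_rot ?perm_rev. Qed.

Lemma sub_height_eq n w q h : size w <= n ->
  ppath (adjS n w) (sub_top w) q -> last (sub_top w) q = sub_bot w ->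
  uniq (sub_top w :: q) -> sub_height n w h -> h = 2 ^ (n - size w).
Proof.
move=> le_wn eq lq uq [[q' [eq' [lq' <-]]] h_min]; apply/eqP; rewrite eqn_leq.
rewrite -{1}(sub_path_size le_wn eq lq uq) h_min ?(sub_dist_ge le_wn eq' lq') //.
by apply: ppath_sub eq => a b _ _ [u [? [_ ?]]]; exists u.
Qed.

Lemma principal_cycle_size_height n w c : principal_cycle n w c ->
  size c = 2 ^ (n - size w).+1 /\ forall h, sub_height n w h -> h = 2 ^ (n - size w).
Proof.
move=> [/ltnW le_wn [[_ [uc _]] [q1 [r [eq1 [lq1 [_ [er [_ same]]]]]]]]].
have /negPf tb := sub_top_neq_bot w.
have : uniq ((sub_top w :: q1) ++ r) by rewrite -(perm_uniq (same_cycle_perm same)).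
rewrite cat_uniq => /and3P [uq1 /hasPn q1_r ur].
have bot_q1 : sub_bot w \in q1.
  by have := mem_last (sub_top w) q1; rewrite lq1 inE eq_sym tb.
have ur' : uniq (sub_top w :: rcons (rev r) (sub_bot w)).
  rewrite /= mem_rcons inE tb mem_rev rcons_uniq mem_rev rev_uniq ur andbT.
  by apply/andP; split; apply: contraTN isT => /q1_r; rewrite inE ?bot_q1 ?eqxx ?orbT.
have size_q1 := sub_path_size le_wn eq1 lq1 uq1.
have := sub_path_size le_wn (ppath_rev (@adjS_sym n w) er) (last_rcons _ _ _) ur'.
rewrite size_rcons size_rev => size_r; split.
  by rewrite (perm_size (same_cycle_perm same)) /= size_cat size_q1 expnS; lia.
by move=> h; apply: sub_height_eq le_wn eq1 lq1 uq1.
Qed.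

Theorem lemma2p3 (n : nat) :
  (forall c : seq vtx, is_cycle n c ->
     exists w : seq letter, size w <= n /\ principal_cycle n w c) /\
  (forall (w : seq letter) (t : nat) (c : seq vtx),
     size w <= n -> sub_height n w (2 ^ t) -> principal_cycle n w c ->
     size c = 2 ^ t.+1).
Proof.
split=> [|w t c _ height principal]; first exact: cycle_principal.
have [size_c height_eq] := principal_cycle_size_height principal.
by move/height_eq/eqP: height; rewrite eqn_exp2l // => /eqP ->.
Qed.
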